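(* Let $W$ be a finite Weyl group having a central involution $\tilde w$, and let $\tilde W=W\ltimes Z$ be the corresponding affine Weyl group. Suppose $x$ is an involution in $\tilde W$ of the form $x=(\tilde w,\mathbf u)$ for some $\mathbf u\in Z$, and let $X=x^{\tilde W}$ be the conjugacy class of $x$ in $\tilde W$. Then $\mathcal{C}(\tilde W,X)$ is disconnected.
   Context: $W$ is a finite Weyl group with root system $\Phi$ in a Euclidean space $V$, $\alpha^\vee=2\alpha/\langle\alpha,\alpha\rangle$, and $Z$ is the coroot lattice $L(\Phi^\vee)$ viewed as a group of translations. The affine Weyl group $\tilde W$ consists of pairs $(a,\mathbf u)$, $a\in W$, $\mathbf u\in Z$, with multiplication $(a,\mathbf u)(b,\mathbf v)=(ab,\mathbf u^b+\mathbf v)$, where $\mathbf u\mapsto\mathbf u^b$ is the (right) linear action of $W$ on $V$. $\mathcal{C}(G,X)$ is the graph on a set $X$ of involutions of $G$ with $x,y$ adjacent iff they commute. *)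

From HB Require Import structures.
From mathcomp Require Import all_boot all_order all_algebra.
From mathcomp Require Import reals.
From Stdlib Require Import Relation_Operators.
Set Implicit Arguments. Unset Strict Implicit. Unset Printing Implicit Defensive.
Import Order.TTheory GRing.Theory Num.Theory.
Local Open Scope ring_scope.

Section Defs.
Variables (R : realType) (n : nat).
Notation vec := 'rV[R]_n.
Notation mat := 'M[R]_n.

Definition dot (u v : vec) : R := (u *m v^T) 0 0.

Definition coroot (a : vec) : vec := (2 / dot a a) *: a.

(* reflection s_a : v |-> v - <v, a^vee> a, as a matrix acting on the right
   of row vectors *)
Definition refl (a : vec) : mat := 1%:M - (coroot a)^T *m a.

Definition root_system (Phi : seq vec) : Prop :=
  [/\ (0 : vec) \notin Phi,
      (forall v : vec, exists c : 'I_(size Phi) -> R,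
          v = \sum_(i < size Phi) c i *: Phi`_i),
      (forall a b, a \in Phi -> b \in Phi -> b *m refl a \in Phi),
      (forall a b, a \in Phi -> b \in Phi -> exists z : int, dot b (coroot a) = z%:~R)
    & (forall a (c : R), a \in Phi -> c *: a \in Phi -> c = 1 \/ c = -1)].

Definition weyl (Phi : seq vec) (w : mat) : Prop :=
  exists s : seq vec, all (fun a => a \in Phi) s /\
    w = foldr (fun a m => refl a *m m) 1%:M s.

Definition coroot_lattice (Phi : seq vec) (u : vec) : Prop :=
  exists c : 'I_(size Phi) -> int,
    u = \sum_(i < size Phi) (c i)%:~R *: coroot Phi`_i.

Definition aff := (mat * vec)%type.
Definition in_aff (Phi : seq vec) (g : aff) : Prop :=
  weyl Phi g.1 /\ coroot_lattice Phi g.2.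
(* (a,u)(b,v) = (ab, u^b + v) with u^b = u *m b *)
Definition aff_mul (g h : aff) : aff := (g.1 *m h.1, g.2 *m h.1 + h.2).
Definition aff_one : aff := (1%:M, 0).
Definition aff_inv (g : aff) : aff := (invmx g.1, - (g.2 *m invmx g.1)).

Definition conj_class (Phi : seq vec) (x y : aff) : Prop :=
  exists g, in_aff Phi g /\ y = aff_mul (aff_mul (aff_inv g) x) g.

Definition comm_adj (Phi : seq vec) (x : aff) (y z : aff) : Prop :=
  [/\ conj_class Phi x y, conj_class Phi x z, y <> z & aff_mul y z = aff_mul z y].

Definition comm_graph_disconnected (Phi : seq vec) (x : aff) : Prop :=
  exists y z, [/\ conj_class Phi x y, conj_class Phi x z &
                  ~ clos_refl_trans aff (comm_adj Phi x) y z].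
End Defs.

(* Since the central involution w~ commutes with W, every conjugate of
   x = (w~, u) has the form (w~, p), and two such elements (w~, p), (w~, q)
   commute exactly when q - p is fixed by w~. Hence along any path of the
   commuting graph the translation part stays in u + Fix(w~). Conjugating x by
   the translation by a coroot v moves the translation part by v - v w~, which
   lies in the (-1)-eigenspace of w~; it is nonzero, hence not fixed, as soon
   as v w~ <> v, and such a coroot exists because the coroots span V and
   w~ <> 1. *)
From HB Require Import structures.
From mathcomp Require Import all_boot all_order all_algebra.
From mathcomp Require Import reals.
From Stdlib Require Import Relation_Operators.
Set Implicit Arguments. Unset Strict Implicit. Unset Printing Implicit Defensive.
Import Order.TTheory GRing.Theory Num.Theory.
Local Open Scope ring_scope.

Lemma clos_refl_trans_invariant (T : Type) (r : T -> T -> Prop) (P : T -> Prop) :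
  (forall a b, r a b -> P a -> P b) ->
  forall a b, clos_refl_trans T r a b -> P a -> P b.
Proof. by move=> rP a b; elim=> [a' b' /rP | // | a' b' c' _ IH1 _ IH2 /IH1 /IH2]. Qed.

Section RootSystem.
Variables (R : realType) (n : nat).
Implicit Types (a v : 'rV[R]_n) (w c : 'M[R]_n) (Phi : seq 'rV[R]_n).

Lemma dot_self_eq0 a : dot a a = 0 -> a = 0.
Proof.
rewrite /dot !mxE => sum0; apply/rowP => j; rewrite mxE.
have sq_ge0 k : true -> 0 <= a 0 k * a^T k 0 by rewrite mxE -expr2 sqr_ge0.
have /eqP := psumr_eq0P sq_ge0 sum0 (i := j) isT.
by rewrite mxE mulf_eq0 orbb => /eqP.
Qed.

Lemma dot_self_neq0 a : a != 0 -> dot a a != 0.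
Proof. by move=> a0; apply: contra_neq a0; apply: dot_self_eq0. Qed.

Lemma refl_involutive a : a != 0 -> refl a *m refl a = 1%:M.
Proof.
move=> a0.
have a_coroot : a *m (coroot a)^T = 2%:M.
  rewrite /coroot linearZ /= -scalemxAr (mx11_scalar (a *m a^T)) -/(dot a a).
  by rewrite -scalemx1 scalerA divfK ?dot_self_neq0 // scalemx1.
rewrite /refl mulmxBl mul1mx mulmxBr mulmx1 mulmxA -(mulmxA _ a) a_coroot.
by rewrite mul_mx_scalar -scalemxAl scaler_nat mulr2n opprB addrK subrK.
Qed.

Lemma root_neq0 Phi a : root_system Phi -> a \in Phi -> a != 0.
Proof. by case=> Phi0 _ _ _ _ aPhi; apply: contraNneq Phi0 => <-. Qed.

Lemma weyl_unitmx Phi w : root_system Phi -> weyl Phi w -> w \in unitmx.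
Proof.
move=> RS [s [sPhi ->]]; elim: s sPhi => [|a s IHs] /=; first by rewrite unitmx1.
case/andP=> aPhi sPhi; rewrite unitmx_mul IHs // andbT.
by case: (mulmx1_unit (refl_involutive (root_neq0 RS aPhi))).
Qed.

Lemma weyl1 Phi : weyl Phi 1%:M.
Proof. by exists [::]. Qed.

Lemma coroot_lattice0 Phi : coroot_lattice Phi 0.
Proof. by exists (fun=> 0); rewrite big1 // => i _; rewrite scale0r. Qed.

Lemma coroot_lattice_coroot Phi (i : 'I_(size Phi)) :
  coroot_lattice Phi (coroot Phi`_i).
Proof.
exists (fun j => (j == i : nat)%:Z).
rewrite (bigD1 i) //= eqxx scale1r big1 ?addr0 // => j /negPf ->.
by rewrite scale0r.
Qed.

Lemma coroot_fixed a c : a != 0 -> (coroot a *m c == coroot a) = (a *m c == a).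
Proof.
move=> a0; rewrite /coroot -scalemxAl; apply/eqP/eqP => [|-> //].
by apply: scalerI; rewrite mulf_neq0 ?invr_eq0 ?dot_self_neq0 ?pnatr_eq0.
Qed.

Lemma exists_coroot_moved Phi c : root_system Phi -> c <> 1%:M ->
  exists i : 'I_(size Phi), coroot Phi`_i *m c != coroot Phi`_i.
Proof.
move=> RS c1; have [_ span _ _ _] := RS.
apply/existsP; apply: contraNT (introN eqP c1) => /existsPn fixed.
have fix_root (i : 'I_(size Phi)) : Phi`_i *m c = Phi`_i.
  apply/eqP; have := fixed i; rewrite negbK coroot_fixed //.
  by apply: root_neq0 RS _; apply: mem_nth.
have fix_all v : v *m c = v.
  have [k ->] := span v; rewrite mulmx_suml; apply: eq_bigr => i _.
  by rewrite -scalemxAl fix_root.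
by apply/eqP/row_matrixP => i; rewrite -[c]mul1mx row_mul fix_all.
Qed.

Lemma involution_moved_not_fixed c v : c *m c = 1%:M -> v *m c != v ->
  (v - v *m c) *m c != v - v *m c.
Proof.
move=> c2 moved; rewrite mulmxBl -mulmxA c2 mulmx1 -opprB eq_sym -subr_eq0 opprK.
by rewrite -mulr2n -scaler_nat scaler_eq0 pnatr_eq0 /= subr_eq0 eq_sym.
Qed.

End RootSystem.

Section AffineWeylGroup.
Variables (R : realType) (n : nat) (Phi : seq 'rV[R]_n).
Implicit Types (c : 'M[R]_n) (u v p q : 'rV[R]_n).

Lemma conj_class_refl (x : aff R n) : conj_class Phi x x.
Proof.
exists (aff_one R n); split; first by split; [apply: weyl1 | apply: coroot_lattice0].
by case: x => c u; rewrite /aff_mul /aff_inv /= invmx1 !mulmx1 mul1mx oppr0 mul0mx add0r addr0.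
Qed.

Lemma conj_class_translate c u v : coroot_lattice Phi v ->
  conj_class Phi (c, u) (c, u + v - v *m c).
Proof.
move=> Lv; exists (1%:M, v); split; first by split; [apply: weyl1 |].
rewrite /aff_mul /aff_inv /= invmx1 !mulmx1 mul1mx mulNmx.
by rewrite -[in RHS]addrA [in RHS]addrC.
Qed.

Lemma conj_class_central c u (y : aff R n) : root_system Phi ->
  (forall w, weyl Phi w -> c *m w = w *m c) ->
  conj_class Phi (c, u) y -> y.1 = c.
Proof.
move=> RS central [g [[Wg _] ->]] /=.
by rewrite -mulmxA central // mulKmx // (weyl_unitmx RS Wg).
Qed.

Lemma aff_commute_same_linear c p q :
  aff_mul (c, p) (c, q) = aff_mul (c, q) (c, p) -> (q - p) *m c = q - p.
Proof.
case=> comm; rewrite mulmxBl; apply/eqP.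
by rewrite subr_eq addrAC eq_sym subr_eq [q + _]addrC comm.
Qed.

Definition fix_coset c u (y : aff R n) := y.1 = c /\ (y.2 - u) *m c = y.2 - u.

Lemma comm_adj_fix_coset c u : root_system Phi ->
  (forall w, weyl Phi w -> c *m w = w *m c) ->
  forall y z, comm_adj Phi (c, u) y z -> fix_coset c u y -> fix_coset c u z.
Proof.
move=> RS central [y1 p] [z1 q] [_ Cz _ comm] [/= y1c fix_p].
have /= z1c := conj_class_central RS central Cz; subst y1 z1; split=> //=.
have -> : q - u = (q - p) + (p - u) by rewrite addrA subrK.
by rewrite mulmxDl fix_p (aff_commute_same_linear comm).
Qed.

End AffineWeylGroup.

Theorem lemma2p6 (R : realType) (n : nat) (Phi : seq 'rV[R]_n)
  (wt : 'M[R]_n) (u : 'rV[R]_n) :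
  root_system Phi ->
  weyl Phi wt ->
  (forall w, weyl Phi w -> wt *m w = w *m wt) ->
  wt *m wt = 1%:M -> wt <> 1%:M ->
  coroot_lattice Phi u ->
  aff_mul (wt, u) (wt, u) = aff_one R n ->
  comm_graph_disconnected Phi (wt, u).
Proof.
move=> RS _ central wt2 wt1 _ _.
have [i moved] := exists_coroot_moved RS wt1; set v := coroot Phi`_i in moved.
exists (wt, u), (wt, u + v - v *m wt); split.
- exact: conj_class_refl.
- exact/conj_class_translate/coroot_lattice_coroot.
move=> path.
have [_] : fix_coset wt u (wt, u + v - v *m wt).
  apply: (clos_refl_trans_invariant (comm_adj_fix_coset RS central) path).
  by rewrite /fix_coset subrr mul0mx.
rewrite /= addrC -addrA addKr; apply/eqP.
exact: involution_moved_not_fixed.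
Qed.
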